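(* Let $m$ be an integer and suppose $m=N_2(1+(x-1)^3h(x))$ for some $h\in\mathbb Z[x]$. Then there is $k\in\mathbb Z[x]$ with $m=N_1(1+(x-1)^3k(x))$, where $5\nmid k(1)$ if $5\nmid h(1)$, and $5\mid k(1)$ if $5\mid h(1)$.
   Context: For $j\geq1$, $\omega_j=e^{2\pi i/5^j}$ and $N_j(F)=\prod_{1\leq \ell\leq 5^j,\ 5\nmid \ell}F(\omega_j^\ell)$. *)

From mathcomp Require Import all_boot all_algebra.
From mathcomp Require Import reals trigo.
From mathcomp Require Export complex.
Import GRing.Theory Num.Theory.
Local Open Scope ring_scope.
Local Open Scope complex_scope.

Definition omega (R : realType) (j : nat) : R[i] :=
  (cos (2 * pi / (5 ^ j)%:R)) +i* (sin (2 * pi / (5 ^ j)%:R)).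

Definition Nj (R : realType) (j : nat) (F : {poly int}) : R[i] :=
  \prod_(1 <= l < (5 ^ j).+1 | ~~ (5 %| l)%N)
     (map_poly (fun z : int => z%:~R : R[i]) F).[omega R j ^+ l].

(* Put e = omega_1 = omega_2^5, F = 1 + (X - 1)^3 h and P(X) = prod_(i < 5) F(e^i X).
   Grouping the indices of N_2 by residue mod 5 gives N_2(F) = prod_(l=1..4) P(omega_2^l).
   Since P(eX) = P(X), P = G(X^5).  Each coefficient of P is an integer polynomial in e
   that is unchanged when e is replaced by another primitive root e^k; this forces it
   to be an integer, congruent mod 5 to its value at e = 1, which is a coefficient of
   F^5 = F(X^5) mod 5.  Hence G = F + 5A.  Finally 5 is congruent to a multiple of
   (X - 1)^3 modulo the cyclotomic polynomial Phi_5, so G agrees at e, ..., e^4 with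
   some 1 + (X - 1)^3 k where k(1) = h(1) mod 5, and
   N_2(F) = prod_l G(e^l) = N_1(1 + (X - 1)^3 k). *)

From mathcomp Require Import all_boot all_algebra.
From mathcomp Require Import reals trigo.
From mathcomp Require Import complex.
From mathcomp Require Import finfield order ring lra.

Import Order.TTheory GRing.Theory Num.Theory.
Local Open Scope ring_scope.

Lemma prime_prim_root (R : idomainType) p (z : R) :
  prime p -> z ^+ p = 1 -> z != 1 -> p.-primitive_root z.
Proof.
move=> p_pr zp1 z_neq1.
have [m prim_z m_dvd_p] := prim_order_exists (prime_gt0 p_pr) zp1.
case/primeP: p_pr => _ /(_ m m_dvd_p) /orP[/eqP m1 | /eqP <-] //.
by move: z_neq1; rewrite -[z]expr1 -(prim_expr_order prim_z) m1 eqxx.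
Qed.

(* The common value of r at the n-th roots of unity z^k <> 1, if there is one:
   the sum of z^k r(z^k) over k < n is both r(1) minus that value and n times
   the sum of the coefficients r_j with n | j + 1. *)
Definition prim_root_const n (r : {poly int}) : int :=
  r.[1] - (\sum_(j < size r | (n %| j.+1)%N) r`_j) *+ n.

Lemma prim_root_const0 n : prim_root_const n 0 = 0.
Proof. by rewrite /prim_root_const horner0 size_poly0 big_ord0 mul0rn subr0. Qed.

Section PrimitiveRoot.
Context {C : fieldType} {n : nat} {z : C}.
Hypothesis prim_z : n.-primitive_root z.

Lemma sum_prim_root_exprM m :
  \sum_(k < n) z ^+ (k * m) = if (n %| m)%N then n%:R else 0.
Proof.
under eq_bigr do rewrite mulnC exprM.
rewrite (prim_order_dvd prim_z); have [->|zm_neq1] := eqVneq.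
  by rewrite (eq_bigr (fun=> 1)) ?sumr_const ?card_ord // => k _; rewrite expr1n.
have := subrX1 (z ^+ m) n; rewrite exprAC (prim_expr_order prim_z) expr1n subrr.
by move/esym/eqP; rewrite mulf_eq0 subr_eq0 (negPf zm_neq1) => /eqP.
Qed.

Lemma horner_sum_Xn_prim_root l : ~~ (n %| l)%N ->
  (\sum_(i < n) 'X^i).[z ^+ l] = 0 :> C.
Proof.
move=> n_ndvd_l; have := sum_prim_root_exprM l; rewrite (negPf n_ndvd_l) => <-.
by rewrite horner_sum; apply: eq_bigr => i _; rewrite hornerXn -exprM mulnC.
Qed.

Lemma big_prim_root_reindex {R : Type} {idx : R} (op : Monoid.com_law idx)
    (F : C -> R) {z' w : C} :
  n.-primitive_root z' -> w ^+ n = 1 ->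
  \big[op/idx]_(i < n) F (w * z' ^+ i) = \big[op/idx]_(i < n) F (z ^+ i).
Proof.
move=> prim_z' wn1.
have root_wz' (i : 'I_n) : (w * z' ^+ i) ^+ n = 1.
  by rewrite exprMn wn1 exprAC (prim_expr_order prim_z') expr1n mul1r.
pose log i := sval (prim_rootP prim_z (root_wz' i)).
have logE i : z ^+ log i = w * z' ^+ i by rewrite /log; case: prim_rootP.
have w_neq0 : w != 0.
  by have := oner_neq0 C; rewrite -wn1 expf_eq0 (prim_order_gt0 prim_z).
have log_inj : injective log.
  move=> i j eq_log; have := congr1 (fun k : 'I_n => z ^+ k) eq_log; rewrite /= !logE.
  move/(mulfI w_neq0)/eqP; rewrite (eq_prim_root_expr prim_z') !modn_small //.
  by move/eqP/val_inj.
by rewrite [RHS](reindex_inj log_inj); apply: eq_bigr => i _; rewrite logE.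
Qed.

Lemma prim_root_constE (r : {poly int}) (c : C) : (1 < n)%N ->
    (forall k, (0 < k < n)%N -> (map_poly intr r).[z ^+ k] = c) ->
  c = (prim_root_const n r)%:~R.
Proof.
move=> n_gt1 rz_c.
pose k0 : 'I_n := Ordinal (ltnW n_gt1).
have sum_z : \sum_(k < n | k != k0) z ^+ k = -1.
  have := sum_prim_root_exprM 1; under eq_bigr do rewrite muln1.
  rewrite dvdn1 gtn_eqF // (bigD1 k0) //= expr0.
  by move/eqP; rewrite addrC addr_eq0 => /eqP.
pose S := \sum_(k < n) z ^+ k * (map_poly intr r).[z ^+ k].
have S_at1 : S = r.[1]%:~R - c.
  rewrite /S (bigD1 k0) //= expr0 mul1r -horner_map /= rmorph1.
  rewrite (eq_bigr (fun k : 'I_n => z ^+ k * c)) => [|k k_neq_k0]; last first.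
    by rewrite rz_c // ltn_ord andbT lt0n.
  by rewrite -mulr_suml sum_z mulN1r.
have S_coef : S = ((\sum_(j < size r | (n %| j.+1)%N) r`_j) *+ n)%:~R.
  have size_rC : (size (map_poly intr r : {poly C}) <= size r)%N := size_poly _ _.
  rewrite /S; under eq_bigr do rewrite (horner_coef_wide _ size_rC) mulr_sumr.
  rewrite exchange_big /= rmorphMn rmorph_sum /= -mulr_natr mulr_suml [RHS]big_mkcond.
  apply: eq_bigr => j _; rewrite coef_map /=.
  transitivity ((r`_j)%:~R * \sum_(k < n) z ^+ (k * j.+1)).
    by rewrite mulr_sumr; apply: eq_bigr => k _; rewrite mulrCA -exprS -exprM.
  by rewrite sum_prim_root_exprM; case: ifP; rewrite ?mulr0.
by rewrite /prim_root_const rmorphB /= -S_coef S_at1 opprB addrC subrK.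
Qed.

End PrimitiveRoot.

Lemma coef_comp_poly_scaleX (R : comNzRingType) (Q : {poly R}) (c : R) m :
  (Q \Po (c *: 'X))`_m = c ^+ m * Q`_m.
Proof.
rewrite comp_polyE; under eq_bigr do rewrite exprZn scalerA mulrC.
rewrite -(poly_def (size Q) (fun i => c ^+ i * Q`_i)) coef_poly.
case: ltnP => // Q_le_m.
by rewrite nth_default ?mulr0.
Qed.

Definition decimate {R : nzRingType} n (Q : {poly R}) : {poly R} :=
  \poly_(j < size Q) Q`_(j * n).

Section Decimation.
Context {R : nzRingType} {n : nat}.

Lemma coef_decimate (Q : {poly R}) j : (0 < n)%N -> (decimate n Q)`_j = Q`_(j * n).
Proof.
move=> n_gt0; rewrite coef_poly; case: ltnP => // Q_le_j.
by rewrite nth_default // (leq_trans Q_le_j) ?leq_pmulr.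
Qed.

Lemma decimateK (Q : {poly R}) :
  (0 < n)%N -> (forall m, ~~ (n %| m)%N -> Q`_m = 0) -> decimate n Q \Po 'X^n = Q.
Proof.
move=> n_gt0 Q_dvdn; apply/polyP => m; rewrite coef_comp_poly_Xn //.
have [/dvdnP[j ->]|/Q_dvdn -> //] := boolP (n %| m)%N.
by rewrite mulnK // coef_decimate.
Qed.

End Decimation.

Definition norm_poly {R : comNzRingType} n (F : {poly R}) (w : R) : {poly R} :=
  \prod_(i < n) (F \Po (w ^+ i *: 'X)).

Section NormPoly.
Context {R : comNzRingType}.

Lemma norm_poly1 n (F : {poly R}) : norm_poly n F 1 = F ^+ n.
Proof.
rewrite /norm_poly (eq_bigr (fun=> F)) ?prodr_const ?card_ord // => i _.
by rewrite expr1n scale1r comp_polyXr.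
Qed.

Lemma horner_norm_poly n (F : {poly R}) (w x : R) :
  (norm_poly n F w).[x] = \prod_(i < n) F.[w ^+ i * x].
Proof.
rewrite horner_prod; apply: eq_bigr => i _.
by rewrite horner_comp hornerZ hornerX.
Qed.

End NormPoly.

Lemma map_norm_poly (R S : comNzRingType) (f : {rmorphism R -> S}) n
    (F : {poly R}) (w : R) :
  map_poly f (norm_poly n F w) = norm_poly n (map_poly f F) (f w).
Proof.
rewrite rmorph_prod; apply: eq_bigr => i _ /=.
by rewrite map_comp_poly map_polyZ map_polyX rmorphXn.
Qed.

Section NormPolyPrimRoot.
Context {C : fieldType} {n : nat} {z : C}.
Hypothesis prim_z : n.-primitive_root z.

Lemma norm_poly_prim_root_exp (F : {poly C}) k : coprime k n ->
  norm_poly n F (z ^+ k) = norm_poly n F z.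
Proof.
rewrite -(prim_root_exp_coprime _ prim_z) => prim_zk.
pose G y := F \Po (y *: 'X).
rewrite /norm_poly -(big_prim_root_reindex prim_z _ G prim_zk (expr1n _ n)).
by apply: eq_bigr => i _; rewrite /G mul1r.
Qed.

Lemma comp_norm_poly_prim_root (F : {poly C}) :
  norm_poly n F z \Po (z *: 'X) = norm_poly n F z.
Proof.
pose G y := F \Po (y *: 'X).
rewrite /norm_poly rmorph_prod.
rewrite -(big_prim_root_reindex prim_z _ G prim_z (prim_expr_order prim_z)).
apply: eq_bigr => i _ /=; rewrite /G.
by rewrite -comp_polyA comp_polyZ comp_polyX scalerA mulrC.
Qed.

Lemma coef_prim_root_invariant (Q : {poly C}) m :
  Q \Po (z *: 'X) = Q -> ~~ (n %| m)%N -> Q`_m = 0.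
Proof.
move=> /(congr1 (coefp m)) /=; rewrite coef_comp_poly_scaleX (prim_order_dvd prim_z).
move=> /eqP; rewrite -subr_eq0 -[X in _ - X]mul1r -mulrBl mulf_eq0 subr_eq0.
by case/orP=> [->//|/eqP].
Qed.

End NormPolyPrimRoot.

Section FrobeniusModp.
Context {p : nat}.
Hypothesis p_pr : prime p.

Lemma Fp_poly_expp (P : {poly 'F_p}) : P ^+ p = P \Po 'X^p.
Proof.
have pcharP : p \in [pchar {poly 'F_p}] by rewrite pchar_poly pchar_Fp.
elim/poly_ind: P => [|P c IHP]; first by rewrite expr0n gtn_eqF ?prime_gt0 ?comp_poly0.
rewrite comp_poly_MXaddC -IHP -!(pFrobenius_autE pcharP) rmorphD rmorphM /=.
by rewrite !pFrobenius_autE -rmorphXn /= -[X in c ^+ X](card_Fp p_pr) expf_card.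
Qed.

Lemma int_poly_eq_mod_p (G F : {poly int}) :
  map_poly (intr : int -> 'F_p) G = map_poly intr F -> exists A, G = F + A *+ p.
Proof.
move=> GF; exists (\poly_(j < size (G - F)) ((G - F)`_j %/ p)%Z).
apply/polyP => j; rewrite coefD coefMn coef_poly.
case: ltnP => [_|GF_le_j]; last first.
  by apply/eqP; rewrite mul0rn addr0 -subr_eq0 -coefB nth_default.
have p_dvd : (p %| (G - F)`_j)%Z.
  rewrite (dvdz_pcharf (pchar_Fp p_pr)) coefB rmorphB /=.
  by have := congr1 (coefp j) GF; rewrite /= !coef_map /= => ->; rewrite subrr.
by rewrite -mulr_natr natz divzK // coefB addrC subrK.
Qed.

End FrobeniusModp.

(* norm_poly p F^:P 'X is prod_(i < p) F(Y^i X) over Z[Y]; evaluating Y at a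
   primitive p-th root z gives the norm polynomial at z. *)
Definition descent_poly p (F : {poly int}) : {poly int} :=
  map_poly (prim_root_const p) (decimate p (norm_poly p F^:P 'X)).

Section NormDescent.
Context {p : nat} (F : {poly int}).
Hypothesis p_pr : prime p.
Let p_gt0 := prime_gt0 p_pr.
Let E := norm_poly p F^:P 'X.

Lemma coef_descent_poly j : (descent_poly p F)`_j = prim_root_const p E`_(j * p).
Proof. by rewrite coef_map_id0 ?prim_root_const0 // coef_decimate. Qed.

Lemma coef_norm_poly_prim_root (C : fieldType) (z : C) m :
  p.-primitive_root z ->
  (norm_poly p (map_poly intr F) z)`_m = (prim_root_const p E`_m)%:~R.
Proof.
move=> prim_z.
have evE (w : C) :
    norm_poly p (map_poly intr F) w = map_poly (horner_morph (fun a : int => mulrC w a%:~R)) E.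
  rewrite map_norm_poly /= horner_morphX -map_poly_comp; congr norm_poly.
  by apply: eq_map_poly => a /=; rewrite horner_morphC.
apply: (prim_root_constE prim_z _ _ (prime_gt1 p_pr)) => k /andP[k_gt0 k_lt_p].
have co_kp : coprime k p by rewrite coprime_sym prime_coprime // gtnNdvd.
by rewrite -(norm_poly_prim_root_exp prim_z _ _ co_kp) evE coef_map.
Qed.

Lemma descent_polyE (C : fieldType) (z : C) : p.-primitive_root z ->
  norm_poly p (map_poly intr F) z = map_poly intr (descent_poly p F) \Po 'X^p.
Proof.
move=> prim_z; rewrite -[LHS](decimateK _ p_gt0) => [|m]; last first.
  by apply: (coef_prim_root_invariant prim_z); apply: comp_norm_poly_prim_root.
congr (_ \Po _); apply/polyP => j.
by rewrite coef_decimate // !coef_map /= coef_descent_poly coef_norm_poly_prim_root.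
Qed.

Lemma descent_poly_Fp :
  map_poly (intr : int -> 'F_p) (descent_poly p F) = map_poly intr F.
Proof.
have E_at1 : map_poly (horner_eval 1) E = F ^+ p.
  rewrite map_norm_poly /= horner_evalE hornerX -map_poly_comp -norm_poly1.
  by congr norm_poly; apply: map_poly_id => a _ /=; rewrite horner_evalE hornerC.
apply/polyP => j; rewrite !coef_map /= coef_descent_poly /prim_root_const.
rewrite rmorphB rmorphMn /= -mulr_natr pchar_Fp_0 // mulr0 subr0.
have := congr1 (coefp (j * p)) (congr1 (map_poly (intr : int -> 'F_p)) E_at1).
rewrite /= !coef_map /= => ->.
have := congr1 (coefp (j * p)) (Fp_poly_expp p_pr (map_poly intr F)).
by rewrite /= coef_comp_poly_Xn // dvdn_mull // mulnK // -rmorphXn !coef_map.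
Qed.

End NormDescent.

Theorem norm_poly_descent {C : fieldType} {p : nat} {z : C} (F : {poly int}) :
  prime p -> p.-primitive_root z ->
  exists A : {poly int},
    norm_poly p (map_poly intr F) z = map_poly intr (F + A *+ p) \Po 'X^p.
Proof.
move=> p_pr prim_z.
have [A GFA] := int_poly_eq_mod_p p_pr _ _ (descent_poly_Fp F p_pr).
by exists A; rewrite -GFA descent_polyE.
Qed.

Section Omega.
Variable R : realType.
Local Open Scope complex_scope.

Definition expi (a : R) : R[i] := cos a +i* sin a.

Lemma expiD a b : expi a * expi b = expi (a + b).
Proof.
rewrite /expi cosD sinD; apply/eqP; rewrite eq_complex /=.
by apply/andP; split; apply/eqP; ring.
Qed.

Lemma expiMn a k : expi a ^+ k = expi (a *+ k).
Proof.
elim: k => [|k IHk]; first by rewrite /expi mulr0n cos0 sin0.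
by rewrite exprS IHk expiD mulrS.
Qed.

Lemma omegaS_expr5 j : omega R j.+1 ^+ 5 = omega R j.
Proof.
rewrite [omega R j.+1]/omega -/(expi _) expiMn.
have -> : 2 * pi / (5 ^ j.+1)%:R *+ 5 = 2 * pi / (5 ^ j)%:R :> R.
  by rewrite expnSr natrM -mulr_natr; field; rewrite pnatr_eq0 expn_eq0.
by [].
Qed.

Lemma omega0 : omega R 0 = 1.
Proof.
by rewrite /omega expn0 divr1 mulr_natl cos2pi sin2pi.
Qed.

Lemma omega_neq1 j : (0 < j)%N -> omega R j != 1.
Proof.
move=> j_gt0; apply/negP => /eqP/(congr1 (@complex.Im R)) /=; apply/eqP.
rewrite gt_eqF // sin_gt0_pi // divr_gt0 ?mulr_gt0 ?pi_gt0 ?ltr0n ?expn_gt0 //=.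
have five_le : (5 <= (5 ^ j)%:R :> R) by rewrite ler_nat -{1}(expn1 5) leq_pexp2l.
rewrite ltr_pdivrMr ?(lt_le_trans _ five_le) //; have := @pi_gt0 R; nra.
Qed.

Lemma prim_root_omega1 : 5.-primitive_root (omega R 1).
Proof. by apply: prime_prim_root; rewrite ?omegaS_expr5 ?omega0 ?omega_neq1. Qed.

End Omega.

Lemma prod_coprime5_25 (T : comNzRingType) (g : nat -> T) :
  \prod_(1 <= l < (5 ^ 2).+1 | ~~ (5 %| l)%N) g l =
  \prod_(1 <= l < 5) \prod_(0 <= i < 5) g (5 * i + l)%N.
Proof. by rewrite -big_filter -big_allpairs_dep; apply: perm_big. Qed.

Lemma Nj1E (R : realType) (F : {poly int}) :
  Nj R 1 F = \prod_(1 <= l < 5) (map_poly intr F).[omega R 1 ^+ l].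
Proof. by rewrite /Nj -big_filter. Qed.

Lemma Nj2E (R : realType) (F : {poly int}) :
  Nj R 2 F =
  \prod_(1 <= l < 5) (norm_poly 5 (map_poly intr F) (omega R 1)).[omega R 2 ^+ l].
Proof.
rewrite /Nj prod_coprime5_25; apply: eq_bigr => l _.
rewrite big_mkord horner_norm_poly; apply: eq_bigr => i _.
by rewrite exprD exprM omegaS_expr5.
Qed.

(* With u = X - 1: Phi_5 = 5 (1 + 2u + 2u^2) mod u^3, and 1 - 2u + 2u^2 inverts
   1 + 2u + 2u^2 mod u^3, so 5 = Phi_5 (1 - 2u + 2u^2) - u^3 (5 + 11u + 8u^2 + 2u^3). *)
Lemma shift_mod_cyclotomic5 (h A : {poly int}) :
  exists k B : {poly int},
    1 + ('X - 1) ^+ 3 * h + A *+ 5 = 1 + ('X - 1) ^+ 3 * k + (\sum_(i < 5) 'X^i) * B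
    /\ (5 %| k.[1])%Z = (5 %| h.[1])%Z.
Proof.
set u : {poly int} := 'X - 1.
exists (h - (5 + 11 * u + 8 * u ^+ 2 + 2 * u ^+ 3) * A), ((1 - 2 * u + 2 * u ^+ 2) * A).
split.
  rewrite !big_ord_recr big_ord0 /= /u; ring.
by rewrite !hornerE rpredBr // dvdz_mulr.
Qed.

Theorem lemma3p3 (R : realType) (m : int) (h : {poly int}) :
  (m%:~R : R[i]) = Nj R 2 (1 + ('X - 1) ^+ 3 * h) ->
  exists k : {poly int},
    (m%:~R : R[i]) = Nj R 1 (1 + ('X - 1) ^+ 3 * k)
    /\ (~~ (5 %| h.[1])%Z -> ~~ (5 %| k.[1])%Z)
    /\ ((5 %| h.[1])%Z -> (5 %| k.[1])%Z).
Proof.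
move=> m_N2.
have prim_e := prim_root_omega1 R.
have [A FA] := norm_poly_descent (1 + ('X - 1) ^+ 3 * h) (isT : prime 5) prim_e.
have [k [B [FA_kB k_h]]] := shift_mod_cyclotomic5 h A.
exists k; rewrite k_h; split; last by split.
rewrite m_N2 Nj2E Nj1E; apply: eq_big_nat => l /andP[l_gt0 l_lt5].
rewrite FA FA_kB horner_comp hornerXn exprAC omegaS_expr5.
rewrite rmorphD rmorphM hornerD hornerM /=.
rewrite rmorph_sum /=; under eq_bigr do rewrite map_polyXn.
by rewrite (horner_sum_Xn_prim_root prim_e) ?gtnNdvd // mul0r addr0.
Qed.
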